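(* The functor $R:\mathsf{Nom}\to\mathsf{Nom}$, $RX=\{g\in[\mathcal V,X]\mid\forall x\in\mathcal V,\ x\#g(x)\}$ with $R(f)(g)=f\circ g$, which is right adjoint to the abstraction functor $[\mathcal V](-)$, preserves filtered colimits. Hence $[\mathcal V](-):\mathsf{Nom}\to\mathsf{Nom}$ has a finitary right adjoint.
   Context: Nominal sets over a countably infinite set $\mathcal V$ of names; $\mathsf{Nom}$ has equivariant maps; $x\#u$ means $x$ is not in the least finite support of $u$. $[\mathcal V,X]$ is the nominal set of finitely supported functions $\mathcal V\to X$ under $(\pi\cdot f)(x)=\pi\cdot f(\pi^{-1}(x))$. $[\mathcal V]X$ is the name-abstraction of $X$ (quotient of $\mathcal V\times X$ by $(x_1,u_1)\sim(x_2,u_2)$ iff $(x_1\ z)\cdot u_1=(x_2\ z)\cdot u_2$ for some fresh $z$). A functor is finitary if it preserves filtered colimits. *)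

From Stdlib Require Import List Arith Classical FunctionalExtensionality
     ProofIrrelevance PropExtensionality.
Import ListNotations.
Set Implicit Arguments.

Record perm := Perm {
  pf : nat -> nat;
  pg : nat -> nat;
  pfg : forall x, pf (pg x) = x;
  pgf : forall x, pg (pf x) = x;
  pfin : exists l : list nat, forall x, ~ In x l -> pf x = x }.

Lemma perm_ext (p q : perm) : (forall x, pf p x = pf q x) -> p = q.
Proof.
  destruct p as [f g fg gf fin], q as [f' g' fg' gf' fin']; simpl; intro H.
  assert (f = f') by (apply functional_extensionality; auto). subst f'.
  assert (g = g').
  { apply functional_extensionality; intro x.
    transitivity (g (f (g' x))); [rewrite fg'; reflexivity | apply gf]. }
  subst g'. f_equal; apply proof_irrelevance.
Qed.

Definition pid : perm.
Proof. refine (Perm (fun x => x) (fun x => x) _ _ _); auto.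
  exists nil; auto. Defined.

Definition pcomp (p q : perm) : perm.
Proof.
  refine (Perm (fun x => pf p (pf q x)) (fun x => pg q (pg p x)) _ _ _).
  - intro x; rewrite !pfg; reflexivity.
  - intro x; rewrite !pgf; reflexivity.
  - destruct (pfin p) as [l1 H1], (pfin q) as [l2 H2]. exists (l1 ++ l2).
    intros x Hx. rewrite H2, H1; auto; intro; apply Hx; apply in_or_app; auto.
Defined.

Definition pinv (p : perm) : perm.
Proof.
  refine (Perm (pg p) (pf p) (pgf p) (pfg p) _).
  destruct (pfin p) as [l H]. exists l. intros x Hx.
  rewrite <- (H x Hx) at 1. apply pgf.
Defined.

Definition sw (a b x : nat) : nat :=
  if Nat.eq_dec x a then b else if Nat.eq_dec x b then a else x.

Lemma sw_inv a b x : sw a b (sw a b x) = x.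
Proof. unfold sw; repeat (destruct Nat.eq_dec; subst); congruence. Qed.

Definition swap (a b : nat) : perm.
Proof.
  refine (Perm (sw a b) (sw a b) (sw_inv a b) (sw_inv a b) _).
  exists [a; b]. intros x Hx. unfold sw.
  destruct Nat.eq_dec; [subst; exfalso; apply Hx; simpl; auto|].
  destruct Nat.eq_dec; [subst; exfalso; apply Hx; simpl; auto|]. reflexivity.
Defined.

Definition supports {T : Type} (act : perm -> T -> T) (A : list nat) (x : T) :=
  forall p, (forall a, In a A -> pf p a = a) -> act p x = x.

Record nominal := Nominal {
  car :> Type;
  act : perm -> car -> car;
  act_id : forall x, act pid x = x;
  act_comp : forall p q x, act (pcomp p q) x = act p (act q x);
  fin_supp : forall x, exists A, supports act A x }.
Arguments act {n}.

Definition supp (X : nominal) (a : nat) (u : car X) : Prop :=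
  forall A, supports (@act X) A u -> In a A.
Definition fresh (X : nominal) (a : nat) (u : car X) : Prop := ~ supp X a u.

Record eqmap (X Y : nominal) := EqMap {
  emap :> car X -> car Y;
  emap_eqv : forall p x, emap (act p x) = act p (emap x) }.

Lemma pf_inj (p : perm) x y : pf p x = pf p y -> x = y.
Proof. intro H. rewrite <- (pgf p x), <- (pgf p y), H. reflexivity. Qed.

Lemma sig_eq {A : Type} {P : A -> Prop} (x y : sig P) :
  proj1_sig x = proj1_sig y -> x = y.
Proof. destruct x, y; simpl; intro; subst; f_equal; apply proof_irrelevance. Qed.

Lemma supports_conj {T : Type} (ac : perm -> T -> T)
  (Hc : forall p q x, ac (pcomp p q) x = ac p (ac q x)) A x p :
  supports ac A x -> supports ac (map (pf p) A) (ac p x).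
Proof.
  intros HA q Hq.
  assert (Hr : ac (pcomp (pinv p) (pcomp q p)) x = x).
  { apply HA. intros a Ha. simpl. rewrite Hq by (apply in_map; auto). apply pgf. }
  rewrite <- Hc.
  assert (E : pcomp q p = pcomp p (pcomp (pinv p) (pcomp q p))).
  { apply perm_ext; intro y; simpl; rewrite pfg; reflexivity. }
  rewrite E, Hc, Hr. reflexivity.
Qed.

Lemma act_inv_l (X : nominal) p (x : car X) : act (pinv p) (act p x) = x.
Proof.
  rewrite <- act_comp.
  replace (pcomp (pinv p) p) with pid by (apply perm_ext; intro; simpl; rewrite pgf; auto).
  apply act_id.
Qed.

Lemma act_inv_r (X : nominal) p (x : car X) : act p (act (pinv p) x) = x.
Proof.
  rewrite <- act_comp.
  replace (pcomp p (pinv p)) with pid by (apply perm_ext; intro; simpl; rewrite pfg; auto).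
  apply act_id.
Qed.

Lemma fresh_eqv (X : nominal) a (u : car X) p :
  fresh X a u -> fresh X (pf p a) (act p u).
Proof.
  unfold fresh, supp. intro H.
  apply not_all_ex_not in H. destruct H as [A HA].
  apply imply_to_and in HA. destruct HA as [HA Ha].
  intro H2. specialize (H2 _ (@supports_conj _ _ (@act_comp X) _ _ p HA)).
  apply in_map_iff in H2. destruct H2 as [y [Hy Hy']].
  apply pf_inj in Hy. subst. auto.
Qed.

Lemma eqmap_supports X Y (f : eqmap X Y) A u :
  supports (@act X) A u -> supports (@act Y) A (f u).
Proof. intros H q Hq. rewrite <- emap_eqv, H; auto. Qed.

Lemma eqmap_fresh X Y (f : eqmap X Y) a u : fresh X a u -> fresh Y a (f u).
Proof.
  unfold fresh, supp. intros H H2. apply H. intros A HA.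
  apply H2. apply eqmap_supports; auto.
Qed.

Definition pact (X : nominal) (p : perm) (b : nat * car X) : nat * car X :=
  (pf p (fst b), act p (snd b)).

Definition abs_rel (X : nominal) (b1 b2 : nat * car X) : Prop :=
  exists z, z <> fst b1 /\ z <> fst b2 /\ fresh X z (snd b1) /\ fresh X z (snd b2)
    /\ act (swap (fst b1) z) (snd b1) = act (swap (fst b2) z) (snd b2).

Lemma swap_conj p a z :
  pcomp p (swap a z) = pcomp (swap (pf p a) (pf p z)) p.
Proof.
  apply perm_ext; intro x; simpl. unfold sw.
  destruct (Nat.eq_dec x a); destruct (Nat.eq_dec (pf p x) (pf p a));
  try (subst; congruence).
  - apply pf_inj in e; congruence.
  - destruct (Nat.eq_dec x z); destruct (Nat.eq_dec (pf p x) (pf p z));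
    try (subst; congruence). apply pf_inj in e; congruence.
Qed.

Lemma abs_rel_eqv X p b1 b2 :
  abs_rel X b1 b2 -> abs_rel X (pact X p b1) (pact X p b2).
Proof.
  destruct b1 as [a1 u1], b2 as [a2 u2]; unfold abs_rel, pact; simpl.
  intros [z [H1 [H2 [H3 [H4 H5]]]]]. exists (pf p z).
  split; [intro E; apply pf_inj in E; auto|].
  split; [intro E; apply pf_inj in E; auto|].
  split; [apply fresh_eqv; auto|]. split; [apply fresh_eqv; auto|].
  rewrite <- !act_comp, <- !swap_conj, !act_comp, H5. reflexivity.
Qed.

Definition cls (X : nominal) (a : nat) (u : car X) : nat * car X -> Prop :=
  abs_rel X (a, u).

Definition pred_act (X : nominal) (p : perm) (P : nat * car X -> Prop) :=
  fun b => P (pact X (pinv p) b).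

Lemma cls_act X p a u : pred_act X p (cls X a u) = cls X (pf p a) (act p u).
Proof.
  apply functional_extensionality; intros [b v].
  apply propositional_extensionality; unfold pred_act, cls, pact; simpl. split; intro H.
  - apply (abs_rel_eqv p) in H. unfold pact in H; simpl in H.
    rewrite pfg, act_inv_r in H. exact H.
  - apply (abs_rel_eqv (pinv p)) in H. unfold pact in H; simpl in H.
    rewrite pgf, act_inv_l in H. exact H.
Qed.

Definition abs_car (X : nominal) :=
  { P : nat * car X -> Prop | exists a u, P = cls X a u }.

Lemma abs_closed X p (P : nat * car X -> Prop) :
  (exists a u, P = cls X a u) -> exists a u, pred_act X p P = cls X a u.
Proof. intros [a [u E]]; subst. exists (pf p a), (act p u). apply cls_act. Qed.

Definition abs_act (X : nominal) (p : perm) (P : abs_car X) : abs_car X :=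
  exist _ (pred_act X p (proj1_sig P)) (abs_closed p (proj2_sig P)).

Definition AbsN (X : nominal) : nominal.
Proof.
  refine (@Nominal (abs_car X) (@abs_act X) _ _ _).
  - intro P. apply sig_eq; simpl. apply functional_extensionality; intros [b v].
    unfold pred_act, pact; simpl.
    replace (pinv pid) with pid by (apply perm_ext; auto). rewrite act_id; reflexivity.
  - intros p q P. apply sig_eq; simpl. apply functional_extensionality; intros [b v].
    unfold pred_act, pact; simpl.
    replace (pinv (pcomp p q)) with (pcomp (pinv q) (pinv p)) by (apply perm_ext; auto).
    rewrite act_comp; reflexivity.
  - intros [P [a [u E]]]. destruct (@fin_supp X u) as [A HA]. exists (a :: A).
    intros q Hq. apply sig_eq; simpl. subst P. rewrite cls_act.
    rewrite Hq by (simpl; auto). rewrite HA by (intros; apply Hq; simpl; auto).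
    reflexivity.
Defined.

Definition absclass (X : nominal) (a : nat) (u : car X) : car (AbsN X) :=
  exist _ (cls X a u) (ex_intro _ a (ex_intro _ u eq_refl)).

Definition fun_act (X : nominal) (p : perm) (g : nat -> car X) : nat -> car X :=
  fun x => act p (g (pg p x)).

Definition fs (X : nominal) (g : nat -> car X) : Prop :=
  exists A, supports (fun_act X) A g.

Lemma fun_act_comp X p q g : fun_act X (pcomp p q) g = fun_act X p (fun_act X q g).
Proof. apply functional_extensionality; intro x; unfold fun_act; simpl; apply act_comp. Qed.

Lemma fun_act_id X g : fun_act X pid g = g.
Proof. apply functional_extensionality; intro x; unfold fun_act; simpl; apply act_id. Qed.

Definition R_car (X : nominal) :=
  { g : nat -> car X | fs X g /\ forall a, fresh X a (g a) }.

Lemma R_closed X p (g : nat -> car X) :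
  fs X g /\ (forall a, fresh X a (g a)) ->
  fs X (fun_act X p g) /\ (forall a, fresh X a (fun_act X p g a)).
Proof.
  intros [[A HA] Hf]. split.
  - exists (map (pf p) A). apply supports_conj; auto. apply fun_act_comp.
  - intro a. unfold fun_act. rewrite <- (pfg p a) at 1. apply fresh_eqv, Hf.
Qed.

Definition R_act (X : nominal) (p : perm) (g : R_car X) : R_car X :=
  exist _ (fun_act X p (proj1_sig g)) (R_closed p (proj2_sig g)).

Definition RN (X : nominal) : nominal.
Proof.
  refine (@Nominal (R_car X) (@R_act X) _ _ _).
  - intro g; apply sig_eq; simpl; apply fun_act_id.
  - intros p q g; apply sig_eq; simpl; apply fun_act_comp.
  - intros [g [[A HA] Hf]]. exists A. intros q Hq. apply sig_eq; simpl. auto.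
Defined.

Lemma Rfun_closed X Y (f : eqmap X Y) (g : nat -> car X) :
  fs X g /\ (forall a, fresh X a (g a)) ->
  fs Y (fun x => f (g x)) /\ (forall a, fresh Y a (f (g a))).
Proof.
  intros [[A HA] Hf]. split.
  - exists A. intros q Hq. apply functional_extensionality; intro x.
    unfold fun_act. rewrite <- emap_eqv.
    change (act q (g (pg q x))) with (fun_act X q g x). rewrite HA; auto.
  - intro a; apply eqmap_fresh; auto.
Qed.

Definition Rfun X Y (f : eqmap X Y) (g : car (RN X)) : car (RN Y) :=
  exist _ (fun x => f (proj1_sig g x)) (Rfun_closed f (proj2_sig g)).

Definition Rmap X Y (f : eqmap X Y) : eqmap (RN X) (RN Y).
Proof.
  refine (EqMap (RN X) (RN Y) (Rfun f) _).
  intros p g. apply sig_eq; simpl. apply functional_extensionality; intro x.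
  unfold fun_act. apply emap_eqv.
Defined.

Unset Implicit Arguments.

Record category := Category {
  ob : Type;
  hom : ob -> ob -> Type;
  idc : forall i, hom i i;
  comp : forall i j k, hom j k -> hom i j -> hom i k;
  comp_id_l : forall i j (u : hom i j), comp i j j (idc j) u = u;
  comp_id_r : forall i j (u : hom i j), comp i i j u (idc i) = u;
  comp_assoc : forall i j k l (u : hom i j) (v : hom j k) (w : hom k l),
      comp i k l w (comp i j k v u) = comp i j l (comp j k l w v) u }.
Arguments comp {c i j k}.
Arguments idc {c}.

Definition filtered (C : category) : Prop :=
  inhabited (ob C) /\
  (forall i j : ob C, exists k (u : hom C i k) (v : hom C j k), True) /\
  (forall (i j : ob C) (u v : hom C i j), exists k (w : hom C j k), comp w u = comp w v).

Definition is_functor (I : category) (D : ob I -> nominal)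
  (Dm : forall i j, hom I i j -> eqmap (D i) (D j)) : Prop :=
  (forall i x, Dm i i (idc i) x = x) /\
  (forall i j k (u : hom I i j) (v : hom I j k) x, Dm i k (comp v u) x = Dm j k v (Dm i j u x)).

Definition is_cocone (I : category) (D : ob I -> nominal)
  (Dm : forall i j, hom I i j -> eqmap (D i) (D j))
  (C : nominal) (c : forall i, eqmap (D i) C) : Prop :=
  forall i j (u : hom I i j) x, c j (Dm i j u x) = c i x.

Definition is_colimit (I : category) (D : ob I -> nominal)
  (Dm : forall i j, hom I i j -> eqmap (D i) (D j))
  (C : nominal) (c : forall i, eqmap (D i) C) : Prop :=
  is_cocone I D Dm C c /\
  forall (C' : nominal) (c' : forall i, eqmap (D i) C'),
    is_cocone I D Dm C' c' ->
    exists h : eqmap C C', (forall i x, h (c i x) = c' i x) /\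
      forall h' : eqmap C C', (forall i x, h' (c i x) = c' i x) -> forall y, h' y = h y.

Definition R_finitary : Prop :=
  forall (I : category), filtered I ->
  forall (D : ob I -> nominal) (Dm : forall i j, hom I i j -> eqmap (D i) (D j)),
    is_functor I D Dm ->
    forall (C : nominal) (c : forall i, eqmap (D i) C),
      is_colimit I D Dm C c ->
      is_colimit I (fun i => RN (D i)) (fun i j u => Rmap (Dm i j u))
                 (RN C) (fun i => Rmap (c i)).

Definition abs_left_adjoint_R : Prop :=
  forall X : nominal,
    exists eta : eqmap X (RN (AbsN X)),
      (forall u a, proj1_sig (eta u) a = absclass X a u) /\
      forall (Y : nominal) (f : eqmap X (RN Y)),
        exists g : eqmap (AbsN X) Y,
          (forall u, Rmap g (eta u) = f u) /\
          forall g' : eqmap (AbsN X) Y, (forall u, Rmap g' (eta u) = f u) ->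
            forall w, g' w = g w.

(* For the adjunction, f : X -> RY transposes to
   <a>u |-> f(u)(a), well defined because f(u)(a) is invariant under swaps
   with fresh names.  For finitarity, a filtered colimit in Nom is jointly
   surjective and identifies only elements that merge later, so supports and
   freshness are attained at some stage ([value_at_stage]).  An element of RC
   is then rebuilt at a common stage from its values on b::A, b fresh
   ([swap_extension]), and equalities in RC are reflected at a stage in the
   same way; this gives the colimit property ([R_colimit]). *)

From Stdlib Require Import List Arith Lia Classical FunctionalExtensionality
     PropExtensionality ClassicalEpsilon.

Lemma fresh_name (l : list nat) : exists t, ~ In t l.
Proof.
  exists (S (list_sum l)). intro Hin.
  assert (Hle : forall x, In x l -> x <= list_sum l).
  { clear Hin. induction l as [|y l IH]; simpl; intros x Hx; [contradiction|].
    destruct Hx as [<-|Hx]; [lia|]. specialize (IH x Hx). lia. }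
  specialize (Hle _ Hin). lia.
Qed.

Lemma sw_l a b : sw a b a = b.
Proof. unfold sw; destruct Nat.eq_dec; congruence. Qed.

Lemma sw_r a b : sw a b b = a.
Proof. unfold sw; repeat destruct Nat.eq_dec; congruence. Qed.

Lemma sw_other a b x : x <> a -> x <> b -> sw a b x = x.
Proof. intros; unfold sw; repeat destruct Nat.eq_dec; congruence. Qed.

Lemma swap_self a : swap a a = pid.
Proof. apply perm_ext; intro x; simpl; unfold sw; repeat destruct Nat.eq_dec; congruence. Qed.

Lemma swap_via s t r : s <> t -> t <> r -> s <> r ->
  swap s r = pcomp (swap s t) (pcomp (swap t r) (swap s t)).
Proof.
  intros; apply perm_ext; intro x; simpl; unfold sw;
  repeat (destruct Nat.eq_dec; simpl); subst; congruence.
Qed.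

Lemma act_swap_swap (X : nominal) a b (u : car X) :
  act (swap a b) (act (swap a b) u) = u.
Proof.
  rewrite <- act_comp.
  replace (pcomp (swap a b) (swap a b)) with pid
    by (apply perm_ext; intro x; simpl; symmetry; apply sw_inv).
  apply act_id.
Qed.

Lemma swap_outside_support (X : nominal) A (u : car X) a b :
  supports (@act X) A u -> ~ In a A -> ~ In b A -> act (swap a b) u = u.
Proof.
  intros HA Ha Hb. apply HA. intros l Hl. simpl.
  apply sw_other; intro; subst; contradiction.
Qed.

Lemma supports_mono {T} (ac : perm -> T -> T) A B x :
  supports ac A x -> (forall a, In a A -> In a B) -> supports ac B x.
Proof. intros H HAB p Hp. apply H. intros; apply Hp, HAB; auto. Qed.

Lemma fresh_of_support X a (u : car X) A :
  supports (@act X) A u -> ~ In a A -> fresh X a u.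
Proof. intros HA Ha Hs. apply Ha, Hs, HA. Qed.

Lemma fresh_support X a (u : car X) :
  fresh X a u -> exists A, supports (@act X) A u /\ ~ In a A.
Proof.
  unfold fresh, supp. intro H. apply not_all_ex_not in H. destruct H as [A HA].
  apply imply_to_and in HA. exists A; tauto.
Qed.

(* Two names fresh for u can be exchanged without moving u: route the swap
   through a third name outside both supports. *)
Lemma swap_fresh_fix X (u : car X) a z :
  fresh X a u -> fresh X z u -> act (swap a z) u = u.
Proof.
  intros Fa Fz.
  destruct (fresh_support _ _ _ Fa) as [S1 [H1 N1]].
  destruct (fresh_support _ _ _ Fz) as [S2 [H2 N2]].
  destruct (Nat.eq_dec a z) as [<-|Naz]; [rewrite swap_self, act_id; auto|].
  destruct (fresh_name (a :: z :: S1 ++ S2)) as [w Hw].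
  assert (Hw1 : ~ In w S1) by (intro; apply Hw; simpl; rewrite in_app_iff; auto).
  assert (Hw2 : ~ In w S2) by (intro; apply Hw; simpl; rewrite in_app_iff; auto).
  assert (Naw : a <> w) by (intro; subst; apply Hw; simpl; auto).
  assert (Nwz : w <> z) by (intro; subst; apply Hw; simpl; auto).
  rewrite (swap_via a w z), !act_comp by auto.
  rewrite (swap_outside_support X S1 u a w), (swap_outside_support X S2 u w z),
    (swap_outside_support X S1 u a w); auto.
Qed.

Lemma drop_support X (u : car X) s t L :
  supports (@act X) (s :: L) u -> ~ In t (s :: L) -> act (swap s t) u = u ->
  supports (@act X) L u.
Proof.
  intros HS Ht Hst.
  destruct (in_dec Nat.eq_dec s L) as [HsL|HsL].
  { apply (supports_mono _ _ _ _ HS). intros a [<-|Ha]; auto. }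
  assert (Nst : s <> t) by (intro; subst; apply Ht; simpl; auto).
  assert (HtL : ~ In t L) by (intro; apply Ht; simpl; auto).
  intros p Hp. remember (pf p s) as r eqn:Er.
  assert (HrL : ~ In r L).
  { intro Hr. assert (Fr : pf p r = r) by (apply Hp; auto).
    rewrite Er in Fr at 2. apply pf_inj in Fr. subst r. rewrite Fr in Hr. contradiction. }
  (* (s r) p fixes s::L, and (s r) itself fixes u *)
  assert (Hq : act (swap s r) (act p u) = u).
  { rewrite <- act_comp. apply HS. intros a [<-|Ha]; simpl.
    - rewrite <- Er. apply sw_r.
    - rewrite Hp by auto. apply sw_other; intro; subst; contradiction. }
  assert (Hr : act (swap s r) u = u).
  { destruct (Nat.eq_dec s r) as [E|Nsr]; [rewrite <- E, swap_self, act_id; auto|].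
    destruct (Nat.eq_dec t r) as [<-|Ntr]; auto.
    rewrite (swap_via s t r), !act_comp, Hst by auto.
    rewrite (swap_outside_support X (s :: L) u t r), Hst; auto.
    intros [E|E]; contradiction. }
  rewrite <- (act_swap_swap X s r (act p u)), Hq, Hr. auto.
Qed.

Lemma value_support Y A (g : nat -> car Y) a :
  supports (fun_act Y) A g -> supports (@act Y) (a :: A) (g a).
Proof.
  intros H p Hp. assert (Ha : pf p a = a) by (apply Hp; simpl; auto).
  assert (E : fun_act Y p g = g) by (apply H; intros; apply Hp; simpl; auto).
  apply (f_equal (fun h => h a)) in E. unfold fun_act in E.
  assert (Hg : pg p a = a) by (rewrite <- Ha at 1; apply pgf).
  rewrite Hg in E. exact E.
Qed.

Lemma fun_swap_value Y A (g : nat -> car Y) b x :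
  supports (fun_act Y) A g -> ~ In b A -> ~ In x A ->
  g x = act (swap b x) (g b).
Proof.
  intros H Hb Hx.
  assert (E : fun_act Y (swap b x) g = g).
  { apply H. intros l Hl. simpl. apply sw_other; intro; subst; contradiction. }
  apply (f_equal (fun h => h x)) in E. unfold fun_act in E. simpl in E.
  rewrite sw_r in E. auto.
Qed.

Lemma RN_support Y B (F : car (RN Y)) :
  supports (@act (RN Y)) B F -> supports (fun_act Y) B (proj1_sig F).
Proof. intros H p Hp. exact (f_equal (@proj1_sig _ _) (H p Hp)). Qed.

(* For F in RY, the value F a is invariant under swapping a with a name
   fresh for F: both a and z are fresh for F a. *)
Lemma RN_value_swap Y (F : car (RN Y)) a z : z <> a -> fresh (RN Y) z F ->
  act (swap a z) (proj1_sig F a) = proj1_sig F a.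
Proof.
  intros Nza Fz. apply swap_fresh_fix; [apply (proj2 (proj2_sig F))|].
  destruct (fresh_support _ _ _ Fz) as [B [HB NB]].
  apply fresh_of_support with (a :: B).
  - apply value_support, RN_support; auto.
  - intros [E|E]; [congruence|contradiction].
Qed.

Section Abstraction.
Variable X : nominal.

Lemma abs_refl a (u : car X) : abs_rel X (a, u) (a, u).
Proof.
  destruct (fin_supp X u) as [B HB]. destruct (fresh_name (a :: B)) as [z Hz].
  assert (z <> a) by (intro; subst; apply Hz; simpl; auto).
  assert (fresh X z u) by (apply fresh_of_support with B; auto; intro; apply Hz; simpl; auto).
  exists z; simpl. auto 6.
Qed.

Lemma abs_sym b1 b2 : abs_rel X b1 b2 -> abs_rel X b2 b1.
Proof. intros [z [H1 [H2 [H3 [H4 H5]]]]]. exists z; auto 6. Qed.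

(* The witness of abs_rel may be replaced by any other fresh name. *)
Lemma swap_change_fresh a z z' (u : car X) :
  z <> a -> z' <> a -> fresh X z u -> fresh X z' u ->
  act (swap a z') u = act (swap z z') (act (swap a z) u).
Proof.
  intros Hza Hz'a Fz Fz'. destruct (Nat.eq_dec z z') as [<-|Nzz].
  { rewrite swap_self, act_id; auto. }
  rewrite <- act_comp.
  replace (pcomp (swap z z') (swap a z)) with (pcomp (swap a z') (swap z z'))
    by (apply perm_ext; intro x; simpl; unfold sw;
        repeat (destruct Nat.eq_dec; simpl); subst; congruence).
  rewrite act_comp, (swap_fresh_fix X u z z'); auto.
Qed.

Lemma abs_rel_any a u b v z :
  abs_rel X (a, u) (b, v) -> z <> a -> z <> b -> fresh X z u -> fresh X z v ->
  act (swap a z) u = act (swap b z) v.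
Proof.
  intros [w [H1 [H2 [H3 [H4 H5]]]]] ? ? ? ?; simpl in *.
  rewrite (swap_change_fresh a w z), (swap_change_fresh b w z), H5; auto.
Qed.

Lemma abs_trans b1 b2 b3 : abs_rel X b1 b2 -> abs_rel X b2 b3 -> abs_rel X b1 b3.
Proof.
  destruct b1 as [a u], b2 as [b v], b3 as [c w]. intros R1 R2.
  destruct (fin_supp X u) as [Bu Hu]. destruct (fin_supp X v) as [Bv Hv].
  destruct (fin_supp X w) as [Bw Hw].
  destruct (fresh_name (a :: b :: c :: Bu ++ Bv ++ Bw)) as [z Hz].
  simpl in Hz; rewrite !in_app_iff in Hz.
  assert (fresh X z u) by (apply fresh_of_support with Bu; tauto).
  assert (fresh X z v) by (apply fresh_of_support with Bv; tauto).
  assert (fresh X z w) by (apply fresh_of_support with Bw; tauto).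
  exists z; simpl. repeat split; try (intro; subst; tauto); auto.
  rewrite (abs_rel_any a u b v z), (abs_rel_any b v c w z); auto; intro; subst; tauto.
Qed.

Lemma cls_eq a u b v : abs_rel X (a, u) (b, v) -> cls X a u = cls X b v.
Proof.
  intro H. apply functional_extensionality; intro t. apply propositional_extensionality.
  unfold cls. split; intro H'.
  - eapply abs_trans; [apply abs_sym, H | exact H'].
  - eapply abs_trans; [apply H | exact H'].
Qed.

Lemma cls_rel a u b v : cls X a u = cls X b v -> abs_rel X (a, u) (b, v).
Proof. intro E. change (cls X a u (b, v)). rewrite E. apply abs_refl. Qed.

Lemma absclass_act p a u :
  @act (AbsN X) p (absclass X a u) = absclass X (pf p a) (act p u).
Proof. apply sig_eq; simpl. apply cls_act. Qed.

Lemma absclass_surj (w : car (AbsN X)) : exists a u, w = absclass X a u.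
Proof. destruct w as [P [a [u E]]]. exists a, u. apply sig_eq. simpl. auto. Qed.

(* The bound name is fresh: B \ {a} supports <a>u when B supports u.  For p
   fixing B \ {a} and z fresh, (a z)(pa z)p fixes B, whence
   (pa z).(p.u) = (a z).u. *)
Lemma absclass_fresh a u : fresh (AbsN X) a (absclass X a u).
Proof.
  destruct (fin_supp X u) as [B HB].
  apply fresh_of_support with (remove Nat.eq_dec a B); [|apply remove_In].
  intros p Hp. rewrite absclass_act. apply sig_eq; simpl. symmetry. apply cls_eq.
  assert (HpB : forall b, In b B -> b <> a -> pf p b = b)
    by (intros; apply Hp, in_in_remove; auto).
  destruct (Nat.eq_dec (pf p a) a) as [E|N].
  { rewrite E, (HB p); [apply abs_refl|].
    intros b Hb. destruct (Nat.eq_dec b a) as [->|Nb]; auto. }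
  destruct (fresh_name (a :: pf p a :: B ++ map (pf p) B)) as [z Hz].
  simpl in Hz; rewrite in_app_iff in Hz.
  assert (fresh X z u) by (apply fresh_of_support with B; tauto).
  assert (fresh X z (act p u)).
  { apply fresh_of_support with (map (pf p) B); [|tauto].
    apply supports_conj; auto. apply act_comp. }
  exists z; simpl. repeat split; try (intro; subst; tauto); auto.
  assert (Hq : act (pcomp (swap a z) (pcomp (swap (pf p a) z) p)) u = u).
  { apply HB. intros b Hb. simpl. destruct (Nat.eq_dec b a) as [->|Nb].
    - now rewrite sw_l, sw_r.
    - rewrite (HpB b) by auto.
      assert (b <> pf p a) by (intro E; rewrite <- (HpB b) in E by auto;
        apply pf_inj in E; auto).
      assert (b <> z) by (intro; subst; tauto).
      rewrite (sw_other (pf p a) z b), (sw_other a z b); auto. }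
  rewrite !act_comp in Hq. rewrite <- Hq at 1. rewrite act_swap_swap. auto.
Qed.

End Abstraction.

Lemma eta_closed X (u : car X) :
  fs (AbsN X) (fun a => absclass X a u) /\ forall a, fresh (AbsN X) a (absclass X a u).
Proof.
  split; [|intro; apply absclass_fresh].
  destruct (fin_supp X u) as [B HB]. exists B. intros p Hp.
  apply functional_extensionality; intro x. unfold fun_act.
  rewrite absclass_act, pfg, HB; auto.
Qed.

Definition eta X : eqmap X (RN (AbsN X)).
Proof.
  refine (EqMap X (RN (AbsN X)) (fun u => exist _ (fun a => absclass X a u) (eta_closed X u)) _).
  intros p u. apply sig_eq; simpl. apply functional_extensionality; intro x.
  unfold fun_act. rewrite absclass_act, pfg. reflexivity.
Defined.

Section Transpose.
Variables (X Y : nominal) (f : eqmap X (RN Y)).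

Lemma transpose_swap a z u : z <> a -> fresh X z u ->
  proj1_sig (f (act (swap a z) u)) z = proj1_sig (f u) a.
Proof.
  intros Nza Fz. rewrite emap_eqv. simpl. unfold fun_act. simpl. rewrite sw_r.
  apply RN_value_swap; auto. apply eqmap_fresh; auto.
Qed.

Lemma transpose_wd a u b v : cls X a u = cls X b v -> proj1_sig (f u) a = proj1_sig (f v) b.
Proof.
  intro E. apply cls_rel in E. destruct E as [z [H1 [H2 [H3 [H4 H5]]]]]; simpl in *.
  rewrite <- (transpose_swap a z u), <- (transpose_swap b z v), H5; auto.
Qed.

Definition transpose_fun (w : car (AbsN X)) : car Y :=
  let s := constructive_indefinite_description _ (proj2_sig w) in
  let t := constructive_indefinite_description _ (proj2_sig s) in
  proj1_sig (f (proj1_sig t)) (proj1_sig s).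

Lemma transpose_fun_spec a u : transpose_fun (absclass X a u) = proj1_sig (f u) a.
Proof.
  unfold transpose_fun. destruct (constructive_indefinite_description _ _) as [b Hb]. simpl.
  destruct (constructive_indefinite_description _ _) as [v Hv]. simpl.
  apply transpose_wd. simpl in Hv. rewrite <- Hv. reflexivity.
Qed.

Definition transpose : eqmap (AbsN X) Y.
Proof.
  refine (EqMap (AbsN X) Y transpose_fun _).
  intros p w. destruct (absclass_surj X w) as [a [u ->]].
  rewrite absclass_act, !transpose_fun_spec, emap_eqv. simpl. unfold fun_act.
  rewrite pgf. reflexivity.
Defined.

Lemma transpose_universal : exists g : eqmap (AbsN X) Y,
    (forall u, Rmap g (eta X u) = f u) /\
    forall g' : eqmap (AbsN X) Y, (forall u, Rmap g' (eta X u) = f u) -> forall w, g' w = g w.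
Proof.
  exists transpose. split.
  - intro u. apply sig_eq. simpl. apply functional_extensionality; intro a.
    apply transpose_fun_spec.
  - intros g' Hg' w. destruct (absclass_surj X w) as [a [u ->]].
    simpl. rewrite transpose_fun_spec, <- Hg'. reflexivity.
Qed.

End Transpose.

Lemma abstraction_left_adjoint : abs_left_adjoint_R.
Proof. intro X. exists (eta X). split; [reflexivity|]. intros Y f. apply transpose_universal. Qed.

(* Rebuilding a function of RY from its values on b::A (b not in A): keep
   them on A and, elsewhere, transport the value at b by transpositions. *)
Definition swap_extension Y (A : list nat) b (h : nat -> car Y) (x : nat) : car Y :=
  if in_dec Nat.eq_dec x A then h x else act (swap b x) (h b).

Lemma swap_extension_closed Y A b (h : nat -> car Y) :
  ~ In b A ->
  (forall a, In a (b :: A) -> supports (@act Y) (b :: A) (h a) /\ fresh Y a (h a)) ->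
  fs Y (swap_extension Y A b h) /\ forall a, fresh Y a (swap_extension Y A b h a).
Proof.
  intros Hb Hh. unfold swap_extension. split.
  - exists (b :: A). intros p Hp. apply functional_extensionality; intro x.
    unfold fun_act. destruct (in_dec Nat.eq_dec x A) as [Hx|Hx].
    + assert (Hpx : pg p x = x).
      { rewrite <- (Hp x) at 1 by (right; auto). apply pgf. }
      rewrite Hpx. destruct (in_dec Nat.eq_dec x A); [|contradiction].
      apply (proj1 (Hh x (or_intror Hx))). auto.
    + destruct (in_dec Nat.eq_dec (pg p x) A) as [Hx'|Hx'].
      { exfalso. apply Hx. rewrite <- (pfg p x), (Hp (pg p x)) by (right; auto). auto. }
      rewrite <- act_comp, swap_conj, act_comp, pfg, (Hp b) by (left; auto).
      rewrite (proj1 (Hh b (or_introl eq_refl))); auto.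
  - intro a. destruct (in_dec Nat.eq_dec a A) as [Ha|Ha].
    + apply (proj2 (Hh a (or_intror Ha))).
    + rewrite <- (sw_l b a) at 1. apply (fresh_eqv (swap b a)).
      apply (proj2 (Hh b (or_introl eq_refl))).
Qed.

(* The extension is mapped onto g0 when its values on b::A are, since g0 is
   rigid outside its support A. *)
Lemma swap_extension_image Y Z (f : eqmap Y Z) A b (h : nat -> car Y) (g0 : nat -> car Z) :
  supports (fun_act Z) A g0 -> ~ In b A ->
  (forall a, In a (b :: A) -> f (h a) = g0 a) ->
  forall x, f (swap_extension Y A b h x) = g0 x.
Proof.
  intros HA Hb Hh x. unfold swap_extension.
  destruct (in_dec Nat.eq_dec x A) as [Hx|Hx]; [apply Hh; right; auto|].
  rewrite emap_eqv, Hh by (left; auto). symmetry. apply (fun_swap_value Z A); auto.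
Qed.

Definition eqmap_comp X Y Z (g : eqmap Y Z) (f : eqmap X Y) : eqmap X Z.
Proof. refine (EqMap X Z (fun x => g (f x)) _). intros; rewrite !emap_eqv; auto. Defined.

Definition eqmap_id X : eqmap X X := EqMap X X (fun x => x) (fun p x => eq_refl).

Section FilteredColimit.
Variables (I : category) (HI : filtered I) (D : ob I -> nominal)
  (Dm : forall i j, hom I i j -> eqmap (D i) (D j)) (HF : is_functor I D Dm)
  (C : nominal) (c : forall i, eqmap (D i) C) (HC : is_colimit I D Dm C c).

Lemma Dm_id i x : Dm i i (idc i) x = x.
Proof. apply (proj1 HF). Qed.

Lemma Dm_comp i j k (u : hom I i j) (v : hom I j k) x :
  Dm i k (comp v u) x = Dm j k v (Dm i j u x).
Proof. apply (proj2 HF). Qed.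

Lemma cocone i j (u : hom I i j) x : c j (Dm i j u x) = c i x.
Proof. apply (proj1 HC). Qed.

Lemma upper_bound i j : exists k (u : hom I i k) (v : hom I j k), True.
Proof. apply (proj1 (proj2 HI)). Qed.

Lemma coequalize i j (u v : hom I i j) : exists k (w : hom I j k), comp w u = comp w v.
Proof. apply (proj2 (proj2 HI)). Qed.

(* The image of the cocone is itself a cocone; by uniqueness of mediating
   maps it is all of C, i.e. the c_i are jointly surjective. *)
Definition img_car := { z : car C | exists i x, c i x = z }.

Lemma img_closed p (z : car C) : (exists i x, c i x = z) -> exists i x, c i x = act p z.
Proof. intros [i [x E]]; exists i, (act p x); rewrite emap_eqv, E; auto. Qed.

Definition ImgN : nominal.
Proof.
  refine (@Nominal img_car
    (fun p z => exist _ (act p (proj1_sig z)) (img_closed p _ (proj2_sig z))) _ _ _).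
  - intro z; apply sig_eq; simpl; apply act_id.
  - intros; apply sig_eq; simpl; apply act_comp.
  - intros [z Hz]. destruct (fin_supp C z) as [A HA]. exists A.
    intros p Hp. apply sig_eq; simpl; auto.
Defined.

Definition img_in i : eqmap (D i) ImgN.
Proof.
  refine (EqMap (D i) ImgN (fun x => exist _ (c i x) (ex_intro _ i (ex_intro _ x eq_refl))) _).
  intros p x. apply sig_eq; simpl. apply emap_eqv.
Defined.

Definition img_out : eqmap ImgN C := EqMap ImgN C (fun z => proj1_sig z) (fun p z => eq_refl).

Lemma colimit_surj z : exists i x, c i x = z.
Proof.
  destruct (proj2 HC ImgN img_in) as [h [Hh _]].
  { intros i j u x. apply sig_eq; simpl. apply cocone. }
  destruct (proj2 HC C c (proj1 HC)) as [h0 [_ Hu]].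
  assert (E1 := Hu (eqmap_comp _ _ _ img_out h)). assert (E2 := Hu (eqmap_id C)).
  specialize (E1 (fun i x => f_equal (@proj1_sig _ _) (Hh i x)) z).
  specialize (E2 (fun i x => eq_refl) z). simpl in E1, E2.
  destruct (proj2_sig (h z)) as [i [x Ex]]. exists i, x. rewrite Ex, E1. auto.
Qed.

Definition elt := {i : ob I & car (D i)}.

Definition merge (s t : elt) : Prop :=
  exists k (u : hom I (projT1 s) k) (v : hom I (projT1 t) k),
    Dm _ _ u (projT2 s) = Dm _ _ v (projT2 t).

Lemma merge_refl s : merge s s.
Proof. exists (projT1 s), (idc _), (idc _). auto. Qed.

Lemma merge_sym s t : merge s t -> merge t s.
Proof. intros [k [u [v E]]]. exists k, v, u. auto. Qed.

Lemma merge_trans s t r : merge s t -> merge t r -> merge s r.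
Proof.
  destruct s as [i x], t as [j y], r as [l z]; unfold merge; simpl.
  intros [k [u [v E]]] [m [u' [v' E']]].
  destruct (upper_bound k m) as [n [w1 [w2 _]]].
  destruct (coequalize _ _ (comp w1 v) (comp w2 u')) as [p [e He]].
  exists p, (comp e (comp w1 u)), (comp e (comp w2 v')).
  rewrite !Dm_comp, E, <- E'.
  rewrite <- (Dm_comp _ _ _ v w1), <- (Dm_comp _ _ _ u' w2), <- !Dm_comp, He. auto.
Qed.

Definition elt_act (p : perm) (s : elt) : elt := existT _ (projT1 s) (act p (projT2 s)).

Lemma merge_eqv p s t : merge s t -> merge (elt_act p s) (elt_act p t).
Proof.
  destruct s as [i x], t as [j y]; unfold merge, elt_act; simpl.
  intros [k [u [v E]]]. exists k, u, v. rewrite !emap_eqv, E. auto.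
Qed.

Lemma merge_class s t : merge s t -> merge s = merge t.
Proof.
  intro H. apply functional_extensionality; intro r. apply propositional_extensionality.
  split; intro H'; eapply merge_trans; eauto. apply merge_sym; auto.
Qed.

Definition quot_car := { P : elt -> Prop | exists s, P = merge s }.

Definition quot_pact (p : perm) (P : elt -> Prop) : elt -> Prop :=
  fun t => P (elt_act (pinv p) t).

Lemma quot_class_act p s : quot_pact p (merge s) = merge (elt_act p s).
Proof.
  apply functional_extensionality; intro t. apply propositional_extensionality.
  unfold quot_pact. split; intro H.
  - apply (merge_eqv p) in H. destruct t as [j y]; unfold elt_act in *; simpl in *.
    rewrite act_inv_r in H. auto.
  - apply (merge_eqv (pinv p)) in H. destruct s as [i x]; unfold elt_act in *; simpl in *.
    rewrite act_inv_l in H. auto.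
Qed.

Lemma quot_closed p P : (exists s, P = merge s) -> exists s, quot_pact p P = merge s.
Proof. intros [s ->]. exists (elt_act p s). apply quot_class_act. Qed.

Definition QuotN : nominal.
Proof.
  refine (@Nominal quot_car
    (fun p P => exist _ (quot_pact p (proj1_sig P)) (quot_closed p _ (proj2_sig P))) _ _ _).
  - intro P. apply sig_eq; simpl. apply functional_extensionality; intros [j y].
    unfold quot_pact, elt_act; simpl.
    replace (pinv pid) with pid by (apply perm_ext; auto). rewrite act_id; reflexivity.
  - intros p q P. apply sig_eq; simpl. apply functional_extensionality; intros [j y].
    unfold quot_pact, elt_act; simpl.
    replace (pinv (pcomp p q)) with (pcomp (pinv q) (pinv p)) by (apply perm_ext; auto).
    rewrite act_comp; reflexivity.
  - intros [P [[i x] E]]. destruct (fin_supp (D i) x) as [A HA]. exists A.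
    intros p Hp. apply sig_eq; simpl. subst P. rewrite quot_class_act. unfold elt_act; simpl.
    rewrite HA; auto.
Defined.

Definition quot_in i : eqmap (D i) QuotN.
Proof.
  refine (EqMap (D i) QuotN
    (fun x => exist _ (merge (existT _ i x)) (ex_intro _ (existT _ i x) eq_refl)) _).
  intros p x. apply sig_eq; simpl. rewrite quot_class_act. reflexivity.
Defined.

(* Factoring the quotient cocone through C: the colimit only identifies
   elements that merge. *)
Lemma colimit_eq_merge i x j y : c i x = c j y -> merge (existT _ i x) (existT _ j y).
Proof.
  intro E. destruct (proj2 HC QuotN quot_in) as [h [Hh _]].
  { intros i' j' u x'. apply sig_eq; simpl. apply merge_class.
    exists j', (idc _), u. simpl. apply Dm_id. }
  assert (E2 : quot_in i x = quot_in j y) by (rewrite <- !Hh, E; auto).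
  apply (f_equal (@proj1_sig _ _)) in E2. simpl in E2. rewrite E2. apply merge_refl.
Qed.

Lemma colimit_eq_stage k x y : c k x = c k y -> exists m (w : hom I k m), Dm k m w x = Dm k m w y.
Proof.
  intro E. apply colimit_eq_merge in E. destruct E as [m [u [v E]]]; simpl in *.
  destruct (coequalize _ _ u v) as [n [e He]].
  exists n, (comp e u). rewrite Dm_comp, E, <- Dm_comp, He, Dm_comp. auto.
Qed.

Lemma colimit_eq_stage_list k (h1 h2 : nat -> car (D k)) L :
  (forall a, In a L -> c k (h1 a) = c k (h2 a)) ->
  exists m (w : hom I k m), forall a, In a L -> Dm k m w (h1 a) = Dm k m w (h2 a).
Proof.
  induction L as [|a L IH]; intro H.
  - exists k, (idc k). intros a [].
  - destruct (IH (fun b Hb => H b (or_intror Hb))) as [m [w Hw]].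
    assert (E : c m (Dm k m w (h1 a)) = c m (Dm k m w (h2 a)))
      by (rewrite !cocone; apply H; simpl; auto).
    destruct (colimit_eq_stage _ _ _ E) as [n [w' Hw']].
    exists n, (comp w' w). intros b [<-|Hb]; rewrite !Dm_comp; auto. rewrite Hw; auto.
Qed.

(* A support of c_k(y) supports the image of y at a later stage: the extra
   names S are dropped one at a time, using that a swap with a fresh name
   fixes c_k(y) and hence fixes y at a later stage. *)
Lemma support_stage A : forall S k y, supports (@act (D k)) (S ++ A) y ->
  supports (@act C) A (c k y) -> exists m (w : hom I k m), supports (@act (D m)) A (Dm k m w y).
Proof.
  induction S as [|s S IH]; intros k y HS HA; simpl in *.
  { exists k, (idc k). rewrite Dm_id; auto. }
  destruct (in_dec Nat.eq_dec s (S ++ A)) as [Hin|Hout].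
  { apply IH; auto. apply (supports_mono _ _ _ _ HS). intros a [<-|?]; auto. }
  destruct (fresh_name (s :: S ++ A)) as [t Ht].
  assert (Hsw : c k (act (swap s t) y) = c k y).
  { rewrite emap_eqv. apply (swap_outside_support C A); auto.
    - intro; apply Hout; rewrite in_app_iff; auto.
    - intro; apply Ht; simpl; rewrite in_app_iff; auto. }
  destruct (colimit_eq_stage _ _ _ Hsw) as [m [w Hw]]. rewrite emap_eqv in Hw.
  assert (HS' : supports (@act (D m)) (S ++ A) (Dm k m w y)).
  { apply (drop_support _ _ s t); auto. apply eqmap_supports; auto. }
  destruct (IH m _ HS') as [m' [w' Hw']]. { rewrite cocone; auto. }
  exists m', (comp w' w). rewrite Dm_comp. auto.
Qed.

Lemma value_at_stage (z : car C) L a :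
  supports (@act C) L z -> fresh C a z ->
  exists i y, c i y = z /\ supports (@act (D i)) L y /\ fresh (D i) a y.
Proof.
  intros HL Fa. destruct (fresh_support _ _ _ Fa) as [B [HB NB]].
  destruct (colimit_surj z) as [i [y0 <-]].
  destruct (fin_supp (D i) y0) as [S HS].
  destruct (support_stage L S i y0) as [m [w Hw]]; auto.
  { apply (supports_mono _ _ _ _ HS). intros; apply in_or_app; auto. }
  destruct (support_stage B L m (Dm i m w y0)) as [m' [w' Hw']].
  { apply (supports_mono _ _ _ _ Hw). intros; apply in_or_app; auto. }
  { rewrite cocone; auto. }
  exists m', (Dm m m' w' (Dm i m w y0)). split; [rewrite !cocone; auto|].
  split; [apply eqmap_supports; auto|]. apply fresh_of_support with B; auto.
Qed.

Lemma common_stage (P : nat -> forall i, car (D i) -> Prop)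
  (HP : forall a i j (u : hom I i j) y, P a i y -> P a j (Dm i j u y)) a0 L :
  (forall a, In a (a0 :: L) -> exists i y, P a i y) ->
  exists k (h : nat -> car (D k)), forall a, In a (a0 :: L) -> P a k (h a).
Proof.
  assert (Hstage : forall L', (forall a, In a L' -> exists i y, P a i y) ->
                    exists k, forall a, In a L' -> exists y, P a k y).
  { induction L' as [|a L' IH]; intro Hex.
    - destruct HI as [[i] _]. exists i. intros a [].
    - destruct (IH (fun b Hb => Hex b (or_intror Hb))) as [k Hk].
      destruct (Hex a (or_introl eq_refl)) as [i [y Hy]].
      destruct (upper_bound i k) as [n [u [v _]]].
      exists n. intros b [<-|Hb].
      + exists (Dm _ _ u y). apply HP; auto.
      + destruct (Hk b Hb) as [y' Hy']. exists (Dm _ _ v y'). apply HP; auto. }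
  intro Hex. destruct (Hstage _ Hex) as [k Hk]. exists k.
  destruct (Hk a0 (or_introl eq_refl)) as [y0 _].
  assert (Hch : forall a, exists y : car (D k), In a (a0 :: L) -> P a k y).
  { intros a. destruct (in_dec Nat.eq_dec a (a0 :: L)) as [H|H].
    - destruct (Hk a H) as [y Hy]; exists y; auto.
    - exists y0; intro; contradiction. }
  exists (fun a => proj1_sig (constructive_indefinite_description _ (Hch a))).
  intros a Ha. exact (proj2_sig (constructive_indefinite_description _ (Hch a)) Ha).
Qed.


Lemma R_lift (G : car (RN C)) : exists k (g : car (RN (D k))), Rmap (c k) g = G.
Proof.
  destruct G as [g0 [[A HA] Hfr]].
  destruct (fresh_name A) as [b Hb].
  set (P := fun a i (y : car (D i)) =>
              c i y = g0 a /\ supports (@act (D i)) (b :: A) y /\ fresh (D i) a y).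
  assert (HP : forall a i j (u : hom I i j) y, P a i y -> P a j (Dm i j u y)).
  { intros a i j u y [H1 [H2 H3]]. split; [rewrite cocone; auto|].
    split; [apply eqmap_supports; auto|apply eqmap_fresh; auto]. }
  assert (Hex : forall a, In a (b :: A) -> exists i y, P a i y).
  { intros a Ha. apply value_at_stage; auto.
    apply (supports_mono _ _ _ _ (value_support C A g0 a HA)).
    intros x [<-|Hx]; auto. right; auto. }
  destruct (common_stage P HP b A Hex) as [k [h Hh]].
  pose proof (swap_extension_closed (D k) A b h Hb (fun a Ha => proj2 (Hh a Ha))) as Hcl.
  exists k, (exist _ (swap_extension (D k) A b h) Hcl).
  apply sig_eq. simpl. apply functional_extensionality.
  apply swap_extension_image; auto. intros a Ha. apply (proj1 (Hh a Ha)).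
Qed.

(* Elements of R(D_i), R(D_j) identified in RC merge at a later stage: the
   finitely many values on b::A merge at some stage, and the remaining
   values are determined by these. *)
Lemma R_merge i (gi : car (RN (D i))) j (gj : car (RN (D j))) :
  Rmap (c i) gi = Rmap (c j) gj ->
  exists k (u : hom I i k) (v : hom I j k), Rmap (Dm i k u) gi = Rmap (Dm j k v) gj.
Proof.
  intro E. destruct (upper_bound i j) as [k [u [v _]]].
  set (h1 := proj1_sig (Rmap (Dm i k u) gi)). set (h2 := proj1_sig (Rmap (Dm j k v) gj)).
  destruct (proj1 (proj2_sig (Rmap (Dm i k u) gi))) as [A1 H1].
  destruct (proj1 (proj2_sig (Rmap (Dm j k v) gj))) as [A2 H2].
  destruct (fresh_name (A1 ++ A2)) as [b Hb]. rewrite in_app_iff in Hb.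
  assert (Hc : forall a, c k (h1 a) = c k (h2 a)).
  { intro a. unfold h1, h2; simpl. rewrite !cocone.
    exact (f_equal (fun G => proj1_sig G a) E). }
  destruct (colimit_eq_stage_list k h1 h2 (b :: A1 ++ A2) (fun a _ => Hc a)) as [m [w Hw]].
  exists m, (comp w u), (comp w v). apply sig_eq; simpl. apply functional_extensionality; intro x.
  rewrite !Dm_comp. change (Dm k m w (h1 x) = Dm k m w (h2 x)).
  destruct (in_dec Nat.eq_dec x (b :: A1 ++ A2)) as [Hx|Hx]; [apply Hw; auto|].
  simpl in Hx; rewrite in_app_iff in Hx.
  rewrite (fun_swap_value _ A1 h1 b x), (fun_swap_value _ A2 h2 b x) by tauto.
  rewrite !emap_eqv, Hw; simpl; auto.
Qed.

(* R(c_i) is a colimit of R(D_i): the mediating map sends a lift of G to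
   its image, which is well defined by [R_merge]. *)
Lemma R_colimit :
  is_colimit I (fun i => RN (D i)) (fun i j u => Rmap (Dm i j u)) (RN C) (fun i => Rmap (c i)).
Proof.
  split.
  - intros i j u x. apply sig_eq; simpl. apply functional_extensionality; intro y. apply cocone.
  - intros C' c' Hc'.
    assert (Hwd : forall i gi j gj, Rmap (c i) gi = Rmap (c j) gj -> c' i gi = c' j gj).
    { intros i gi j gj E. destruct (R_merge i gi j gj E) as [k [u [v E']]].
      rewrite <- (Hc' i k u gi), <- (Hc' j k v gj). cbv beta. rewrite E'. auto. }
    assert (Hlift : forall G, exists s : {i : ob I & car (RN (D i))},
                       Rmap (c (projT1 s)) (projT2 s) = G).
    { intro G. destruct (R_lift G) as [k [g Eg]]. exists (existT _ k g). auto. }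
    pose (med := fun G => let s := proj1_sig (constructive_indefinite_description _ (Hlift G)) in
                          c' (projT1 s) (projT2 s)).
    assert (Hmed : forall i x, med (Rmap (c i) x) = c' i x).
    { intros i x. unfold med. destruct (constructive_indefinite_description _ _) as [[j y] Hs].
      simpl in *. apply Hwd. auto. }
    assert (Heqv : forall p G, med (act p G) = act p (med G)).
    { intros p G. destruct (R_lift G) as [i [x <-]].
      rewrite <- (emap_eqv (Rmap (c i))), !Hmed, emap_eqv. auto. }
    exists (EqMap _ _ med Heqv). split; [exact Hmed|].
    intros h' Hh' y. destruct (R_lift y) as [i [x <-]]. rewrite Hh'. symmetry. apply (Hmed i x).
Qed.

End FilteredColimit.

Theorem proposition4p13 : R_finitary /\ abs_left_adjoint_R.
Proof.
  split.
  - intros I HI D Dm HF C c HC. exact (R_colimit I HI D Dm HF C c HC).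
  - exact abstraction_left_adjoint.
Qed.
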